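(* Let $P(q)=\sum_{j=0}^n q^ja_j$ be a slice regular polynomial of degree $n\ge1$ with quaternionic coefficients such that $P(1)=\|P\|=1$, where $\|P\|=\max_{|q|\le1}|P(q)|$, and suppose there is a real number $\delta>1$ such that $$\max_{|q|=R}|P(q)|\leq\frac{1+R^{n}}{2}\qquad\text{for all }1<R<\delta.$$ Then $P$ does not have all its zeros within the open unit ball $\mathbb B=\{q\in\mathbb H:|q|<1\}$, i.e. $P$ has a zero $q_0$ with $|q_0|\ge1$.
   Context: $\mathbb H$ denotes the quaternions with modulus $|q|=\sqrt{q\bar q}$. A slice regular polynomial of degree $n$ is a function $q\mapsto\sum_{j=0}^n q^ja_j$ with coefficients $a_j\in\mathbb H$ on the right and $a_n\neq0$; its zeros are the points $q\in\mathbb H$ with $P(q)=0$. *)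

From HB Require Import structures.
From mathcomp Require Import all_boot all_order all_algebra.
From mathcomp Require Import reals.
Set Implicit Arguments. Unset Strict Implicit. Unset Printing Implicit Defensive.
Import Order.TTheory GRing.Theory Num.Theory.
Local Open Scope ring_scope.

Record quat (R : realType) := Quat { qre : R; qi : R; qj : R; qk : R }.

Section Quat.
Variable R : realType.

Definition qzero : quat R := Quat 0 0 0 0.
Definition qone : quat R := Quat 1 0 0 0.

Definition qadd (p q : quat R) : quat R :=
  Quat (qre p + qre q) (qi p + qi q) (qj p + qj q) (qk p + qk q).

Definition qmul (p q : quat R) : quat R :=
  Quat (qre p * qre q - qi p * qi q - qj p * qj q - qk p * qk q)
       (qre p * qi q + qi p * qre q + qj p * qk q - qk p * qj q)
       (qre p * qj q - qi p * qk q + qj p * qre q + qk p * qi q)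
       (qre p * qk q + qi p * qj q - qj p * qi q + qk p * qre q).

Definition qnorm (q : quat R) : R :=
  Num.sqrt (qre q ^+ 2 + qi q ^+ 2 + qj q ^+ 2 + qk q ^+ 2).

Definition qpow (q : quat R) (j : nat) : quat R := iter j (qmul q) qone.

Definition slice_eval (n : nat) (a : nat -> quat R) (q : quat R) : quat R :=
  \big[qadd/qzero]_(j < n.+1) qmul (qpow q j) (a j).

End Quat.

From mathcomp Require Import all_boot all_order all_algebra.
From mathcomp Require Import reals.
From mathcomp.real_closed Require Import complex polyrcf.
From mathcomp Require Import ring lra zify.
Import Order.TTheory GRing.Theory Num.Theory.
Local Open Scope ring_scope.
Set Implicit Arguments. Unset Strict Implicit. Unset Printing Implicit Defensive.

(* On the real line [S(t) = |P(t)|^2] is a real polynomial of degree [2n] with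
   [S(1) = 1], and the growth bound [S(t) <= ((1 + t^n)/2)^2] just right of [1]
   forces [S'(1) <= n].  If every complex root [z_k] of [S] had [|z_k| < 1],
   then [S'(1)/S(1) = sum_k 1/(1 - z_k)] would have real part [> 2n/2 = n];
   hence [S] has a complex root [z] with [|z| >= 1].  Splitting the value at
   [z] of the coordinate polynomials of [P] into real and imaginary parts gives
   quaternions [U], [V] with [P(x + yI) = U + I V] on every slice [C_I];
   [S(z) = 0] says [|U| = |V|] and [U] is orthogonal to [V], so [I = -U V^-1]
   is a unit imaginary quaternion and [x + yI] is a zero of [P] of modulus
   [|z|]. *)

Lemma logderiv_prod_XsubC (F : fieldType) (r : seq F) (x : F) : x \notin r ->
  let Q := \prod_(z <- r) ('X - z%:P) in
  Q^`().[x] / Q.[x] = \sum_(z <- r) (x - z)^-1.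
Proof.
elim: r => [|z r IH] /=; first by rewrite !big_nil derivC horner0 mul0r.
rewrite inE negb_or => /andP[xz xr]; have {}IH := IH xr.
set Q := \prod_(y <- r) _ in IH *.
have Qx : Q.[x] != 0 by rewrite /Q -rootE root_prod_XsubC.
have xz' : x - z != 0 by rewrite subr_eq0.
rewrite !big_cons derivM derivXsubC mul1r -IH !hornerE.
by field; apply/andP.
Qed.

Section ComplexRoots.
Variable R : rcfType.
Local Notation C := R[i].
Local Notation Re := (@complex.Re R).

Lemma half_lt_Re_inv_1subC (z : C) : `|z| < 1 -> 2^-1 < Re (1 - z)^-1.
Proof.
rewrite normc_def -[1]/(1%:C)%C ltcR -[X in _ < X]sqrtr1 ltr_sqrt ?ltr01 //.
case: z => x y /= hxy.
have hd : 0 < (1 - x) ^+ 2 + (- y) ^+ 2 by nra.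
rewrite sub0r ltr_pdivlMr // mulrC ltr_pdivrMr ?ltr0n //; nra.
Qed.

Lemma Re_logderiv_gt (p : {poly C}) : (1 < size p)%N ->
  (forall z, root p z -> `|z| < 1) ->
  (size p).-1%:R / 2 < Re (p^`().[1] / p.[1]).
Proof.
move=> sp hroots; have [r hp] := closed_field_poly_normal p.
have c0 : lead_coef p != 0 by rewrite lead_coef_eq0 -size_poly_gt0 ltnW.
have rlt : forall z, z \in r -> `|z| < 1.
  by move=> z zr; apply: hroots; rewrite hp rootZ // root_prod_XsubC.
have r1 : 1 \notin r by apply/negP => /rlt; rewrite normr1 ltxx.
have sr : size p = (size r).+1 by rewrite {1}hp size_scale // size_prod_XsubC.
rewrite sr /= hp derivZ !hornerZ invfM mulrACA divff // mul1r.
rewrite logderiv_prod_XsubC // (raddf_sum (Re : Rcomplex R -> R)).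
rewrite -sum1_size natr_sum mulr_suml big_seq [X in _ < X]big_seq.
apply: ltr_sum => [|z /rlt]; last by rewrite mul1r; apply: half_lt_Re_inv_1subC.
by case: r {hp rlt r1} sr sp => [->|z r _ _] //=; rewrite inE eqxx.
Qed.

Lemma real_poly_root_outside_unit_disk (p : {poly R}) : (1 < size p)%N ->
  p^`().[1] / p.[1] <= (size p).-1%:R / 2 ->
  exists2 z : C, root (map_poly (real_complex R) p) z & 1 <= `|z|.
Proof.
set pC := map_poly _ p => sp le_p.
have [r defpC] := closed_field_poly_normal pC.
have pC0 : lead_coef pC != 0 by rewrite lead_coef_eq0 map_poly_eq0 -size_poly_gt0 ltnW.
have rootE z : root pC z = (z \in r) by rewrite defpC rootZ // root_prod_XsubC.
have [/hasP[z zr z1]|/hasPn rlt] := boolP (has (fun z => 1 <= `|z|) r).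
  by exists z; rewrite ?rootE.
have eRe : Re (pC^`().[1] / pC.[1]) = p^`().[1] / p.[1].
  by rewrite /pC deriv_map -(rmorph1 (real_complex R)) !horner_map -fmorph_div.
have roots_in z : root pC z -> `|z| < 1.
  by rewrite rootE => /rlt; rewrite real_ltNge ?normr_real ?real1.
have sp' : (1 < size pC)%N by rewrite size_map_poly.
by have := Re_logderiv_gt sp' roots_in; rewrite eRe size_map_poly ltNge le_p.
Qed.

End ComplexRoots.

Lemma deriv_le_of_le_right (R : rcfType) (F G : {poly R}) (c d : R) :
  c < d -> F.[c] = G.[c] -> (forall t, c < t -> t < d -> F.[t] <= G.[t]) ->
  F^`().[c] <= G^`().[c].
Proof.
(* With [F - G = H (X - c)], [H(c) > 0] would make [F > G] just right of [c]. *)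
move=> cd eqc leFG; have /factor_theorem[H defD] : root (F - G) c.
  by rewrite rootE !hornerE eqc subrr.
have -> : F^`().[c] = G^`().[c] + H.[c].
  by rewrite -[F](subrK G) defD derivD derivM derivXsubC !hornerE subrr; ring.
rewrite gerDl leNgt; apply/negP => Hc.
have [e e0 Hnear] := poly_cont c H Hc.
pose t := c + Num.min e (d - c) / 2.
have m0 : 0 < Num.min e (d - c) by rewrite lt_min e0 subr_gt0.
have me : Num.min e (d - c) <= e by rewrite ge_min lexx.
have md : Num.min e (d - c) <= d - c by rewrite ge_min lexx orbT.
have ct : c < t by rewrite /t ltrDl divr_gt0.
have Ht : 0 < H.[t].
  have : `|t - c| < e by rewrite /t addrAC subrr add0r ger0_norm ?divr_ge0 ?ltW //; lra.
  by move/Hnear; rewrite distrC ltr_distl; lra.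
have td : t < d by rewrite /t; lra.
have := leFG t ct td; rewrite leNgt -subr_gt0 -hornerN -hornerD defD hornerM.
by rewrite hornerXsubC mulr_gt0 ?subr_gt0.
Qed.

Lemma deriv1_le_of_le_sqr_half_1addXn (R : rcfType) (S : {poly R}) n (delta : R) :
  1 < delta -> S.[1] = 1 ->
  (forall t, 1 < t -> t < delta -> S.[t] <= ((1 + t ^+ n) / 2) ^+ 2) ->
  S^`().[1] <= n%:R.
Proof.
move=> delta1 S1 leS; pose G : {poly R} := ((1 + 'X^n) * (2^-1)%:P) ^+ 2.
have GE t : G.[t] = ((1 + t ^+ n) / 2) ^+ 2 by rewrite /G !hornerE.
have -> : n%:R = G^`().[1].
  rewrite /G deriv_exp derivM derivD derivC derivXn derivC !hornerE !expr1n /=.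
  by rewrite hornerMn hornerXn expr1n; field.
apply: (deriv_le_of_le_right delta1) => [|t t1 td]; rewrite GE ?leS //.
by rewrite expr1n S1; field.
Qed.

Lemma coef_sqr_mid (R : nzRingType) (p : {poly R}) (m : nat) :
  (size p <= m.+1)%N -> (p ^+ 2)`_(m + m) = p`_m ^+ 2.
Proof.
move=> sp; have mlt : (m < (m + m).+1)%N by rewrite ltnS leq_addr.
rewrite expr2 coefM (bigD1 (Ordinal mlt)) //= addnK.
rewrite big1 ?addr0 // => -[j /= jm] /eqP nej.
have [ltjm|gtjm|eqjm] := ltngtP j m.
- by rewrite [p`_(_ - _)]nth_default ?mulr0 //; apply: leq_trans sp _; lia.
- by rewrite nth_default ?mul0r //; apply: leq_trans sp _.
- by case: nej; apply: val_inj.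
Qed.

Section QuaternionAlgebra.
Variable R : realType.
Local Notation Re := (@complex.Re R).
Local Notation Im := (@complex.Im R).
Implicit Types (p q U V I : quat R) (z w : R[i]).

Definition qnorm2 q : R := qre q ^+ 2 + qi q ^+ 2 + qj q ^+ 2 + qk q ^+ 2.
Definition qdot p q : R := qre p * qre q + qi p * qi q + qj p * qj q + qk p * qk q.
Definition qconj q : quat R := Quat (qre q) (- qi q) (- qj q) (- qk q).
Definition qscale (c : R) q : quat R := Quat (c * qre q) (c * qi q) (c * qj q) (c * qk q).
Definition unit_imag I : Prop := qre I = 0 /\ qnorm2 I = 1.
Definition qI : quat R := Quat 0 1 0 0.

(* The point [Re z + Im z I] of the slice [C_I]; the real part of [I] is ignored. *)
Definition qslice I z : quat R := Quat (Re z) (Im z * qi I) (Im z * qj I) (Im z * qk I).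

Lemma qnorm2_ge0 q : 0 <= qnorm2 q.
Proof. by rewrite /qnorm2 !addr_ge0 ?sqr_ge0. Qed.

Lemma sqr_qnorm q : qnorm q ^+ 2 = qnorm2 q.
Proof. exact/sqr_sqrtr/qnorm2_ge0. Qed.

Lemma qnorm2_eq0 q : qnorm2 q = 0 -> q = qzero R.
Proof.
case: q => x0 x1 x2 x3; rewrite /qnorm2 /= => h.
have := sqr_ge0 x0; have := sqr_ge0 x1; have := sqr_ge0 x2; have := sqr_ge0 x3.
move=> *; rewrite /qzero; congr Quat; apply/eqP; rewrite -sqrf_eq0; apply/eqP; lra.
Qed.

Lemma unit_imag_qI : unit_imag qI.
Proof. by split; rewrite // /qnorm2 /=; ring. Qed.

Lemma qnorm2_mul p q : qnorm2 (qmul p q) = qnorm2 p * qnorm2 q.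
Proof. by case: p q => [? ? ? ?] [? ? ? ?]; rewrite /qnorm2 /=; ring. Qed.

Lemma qnorm2_conj q : qnorm2 (qconj q) = qnorm2 q.
Proof. by case: q => ? ? ? ?; rewrite /qnorm2 /= !sqrrN. Qed.

Lemma qnorm2_scale c q : qnorm2 (qscale c q) = c ^+ 2 * qnorm2 q.
Proof. by case: q => ? ? ? ?; rewrite /qnorm2 /=; ring. Qed.

Lemma qre_mul_conj p q : qre (qmul p (qconj q)) = qdot p q.
Proof. by case: p q => [? ? ? ?] [? ? ? ?]; rewrite /qdot /=; ring. Qed.

(* The witness is [I = - U V^-1 = - U conj(V) / |V|^2]. *)
Lemma unit_imag_solution U V : qnorm2 U = qnorm2 V -> qdot U V = 0 ->
  exists2 I, unit_imag I & qadd U (qmul I V) = qzero R.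
Proof.
move=> eqUV dotUV; have [V0|] := eqVneq (qnorm2 V) 0.
  exists qI; first exact: unit_imag_qI.
  rewrite (qnorm2_eq0 V0) (qnorm2_eq0 (etrans eqUV V0)).
  by rewrite /qadd /qmul /=; congr Quat; ring.
move=> V0; exists (qscale (- (qnorm2 V)^-1) (qmul U (qconj V))); first split.
- by rewrite -[qre _]/(_ * qre (qmul U (qconj V))) qre_mul_conj dotUV mulr0.
- rewrite qnorm2_scale qnorm2_mul qnorm2_conj eqUV sqrrN exprVn -expr2.
  by rewrite mulVf ?expf_neq0.
move: V0; case: U V {eqUV dotUV} => [u0 u1 u2 u3] [v0 v1 v2 v3].
by rewrite /qnorm2 /qadd /qzero /= => V0; congr Quat; field.
Qed.

Lemma qmul_slice I z w : unit_imag I ->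
  qmul (qslice I z) (qslice I w) = qslice I (z * w).
Proof.
case: I => i0 i1 i2 i3 [/= -> I1]; move: I1; rewrite /qnorm2 /= expr0n add0r => I1.
case: z w => [x y] [u v]; rewrite /qslice /qmul /=; congr Quat; try ring.
by transitivity (x * u - y * v * (i1 ^+ 2 + i2 ^+ 2 + i3 ^+ 2));
  [ring | by rewrite I1 mulr1].
Qed.

Lemma qpow_slice I z j : unit_imag I -> qpow (qslice I z) j = qslice I (z ^+ j).
Proof.
move=> hI; elim: j => [|j IH]; first by rewrite /qpow /qslice /= !mul0r.
by rewrite /qpow iterS -/(qpow _ j) IH qmul_slice // exprS.
Qed.

Lemma qnorm_slice I z : unit_imag I -> (qnorm (qslice I z))%:C%C = `|z|.
Proof.
case=> I0 I1; rewrite normc_def /qnorm; congr (Num.sqrt _)%:C%C.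
move: I1; rewrite /qnorm2 I0 expr0n add0r /= => I1.
by rewrite !exprMn -!addrA -!mulrDr addrA I1 mulr1.
Qed.

Lemma big_qaddE m (F : 'I_m -> quat R) : \big[@qadd R/qzero R]_(j < m) F j =
  Quat (\sum_(j < m) qre (F j)) (\sum_(j < m) qi (F j))
       (\sum_(j < m) qj (F j)) (\sum_(j < m) qk (F j)).
Proof.
have qE q : q = Quat (qre q) (qi q) (qj q) (qk q) by case: q.
by rewrite [LHS]qE; congr Quat; apply: big_morph.
Qed.

End QuaternionAlgebra.

Section SlicePolynomial.
Variables (R : realType) (n : nat) (a : nat -> quat R).
Local Notation Re := (@complex.Re R).
Local Notation Im := (@complex.Im R).
Local Notation toC := (real_complex R).

Definition coord_poly (f : quat R -> R) : {poly R} := \poly_(j < n.+1) f (a j).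

(* [coord_eval Re z] and [coord_eval Im z] are the real and imaginary parts,
   coordinatewise, of [sum_j z^j a_j] computed as if [z] commuted with the
   coefficients. *)
Definition coord_eval (g : R[i] -> R) (z : R[i]) : quat R :=
  Quat (g (map_poly toC (coord_poly (@qre R))).[z])
       (g (map_poly toC (coord_poly (@qi R))).[z])
       (g (map_poly toC (coord_poly (@qj R))).[z])
       (g (map_poly toC (coord_poly (@qk R))).[z]).

Lemma horner_coord_poly f z :
  (map_poly toC (coord_poly f)).[z] = \sum_(j < n.+1) (f (a j))%:C%C * z ^+ j.
Proof.
rewrite (horner_coef_wide _ (_ : size _ <= n.+1)%N) ?size_map_poly ?size_poly //.
by apply: eq_bigr => j _; rewrite coef_map coef_poly ltn_ord.
Qed.

Lemma Re_horner_coord_poly f z :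
  Re (map_poly toC (coord_poly f)).[z] = \sum_(j < n.+1) f (a j) * Re (z ^+ j).
Proof.
rewrite horner_coord_poly (raddf_sum (Re : Rcomplex R -> R)).
by apply: eq_bigr => j _; case: (z ^+ j) => u v /=; ring.
Qed.

Lemma Im_horner_coord_poly f z :
  Im (map_poly toC (coord_poly f)).[z] = \sum_(j < n.+1) f (a j) * Im (z ^+ j).
Proof.
rewrite horner_coord_poly (raddf_sum (Im : Rcomplex R -> R)).
by apply: eq_bigr => j _; case: (z ^+ j) => u v /=; ring.
Qed.

Lemma slice_eval_slice I z : unit_imag I ->
  slice_eval n a (qslice I z) = qadd (coord_eval Re z) (qmul I (coord_eval Im z)).
Proof.
move=> hI; have [reI _] := hI.
rewrite /slice_eval big_qaddE /coord_eval /qadd /qmul /= reI !mul0r.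
rewrite !(Re_horner_coord_poly, Im_horner_coord_poly).
congr Quat; rewrite ?sub0r ?add0r !mulr_sumr -?sumrN -!(big_split, sumrB) /=;
  apply: eq_bigr => j _; rewrite qpow_slice // /qslice /qmul /=; ring.
Qed.

Definition sqnorm_poly : {poly R} :=
  coord_poly (@qre R) ^+ 2 + coord_poly (@qi R) ^+ 2
  + coord_poly (@qj R) ^+ 2 + coord_poly (@qk R) ^+ 2.

Lemma sqnorm_poly_real (t : R) :
  sqnorm_poly.[t] = qnorm2 (slice_eval n a (Quat t 0 0 0)).
Proof.
have -> : Quat t 0 0 0 = qslice (qI R) t%:C%C by rewrite /qslice /= !mul0r.
rewrite slice_eval_slice; last exact: unit_imag_qI.
rewrite /coord_eval !horner_map /=.
by rewrite /sqnorm_poly /qnorm2 /qadd /qmul !hornerE /=; congr (_ + _ + _ + _); ring.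
Qed.

Lemma coef_sqnorm_poly : sqnorm_poly`_(n + n) = qnorm2 (a n).
Proof.
by rewrite /sqnorm_poly !coefD !coef_sqr_mid ?size_poly // !coef_poly ltnSn.
Qed.

Lemma root_sqnorm_poly z : root (map_poly toC sqnorm_poly) z ->
  qnorm2 (coord_eval Re z) = qnorm2 (coord_eval Im z) /\
  qdot (coord_eval Re z) (coord_eval Im z) = 0.
Proof.
rewrite /root /sqnorm_poly !rmorphD !rmorphXn !hornerD !horner_exp.
rewrite /coord_eval /qnorm2 /qdot /=.
case: (map_poly _ _).[z] => [x0 y0]; case: (map_poly _ _).[z] => [x1 y1].
case: (map_poly _ _).[z] => [x2 y2]; case: (map_poly _ _).[z] => [x3 y3].
rewrite /= => /eqP[Re0 Im0]; split; lra.
Qed.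

End SlicePolynomial.

Theorem theorem3p2 (R : realType) (n : nat) (a : nat -> quat R) :
  (1 <= n)%N ->
  a n <> qzero R ->
  slice_eval n a (qone R) = qone R ->
  (* ||P|| = max_{|q|<=1} |P(q)| = 1 (attained at q = 1 since P(1) = 1) *)
  (forall q : quat R, qnorm q <= 1 -> qnorm (slice_eval n a q) <= 1) ->
  (exists delta : R, 1 < delta /\
     forall Rad : R, 1 < Rad -> Rad < delta ->
       forall q : quat R, qnorm q = Rad ->
         qnorm (slice_eval n a q) <= (1 + Rad ^+ n) / 2) ->
  exists q0 : quat R, slice_eval n a q0 = qzero R /\ 1 <= qnorm q0.
Proof.
move=> n1 an0 P1 _ [delta [delta1 growth]].
set S := sqnorm_poly n a.
have S1 : S.[1] = 1.
  by rewrite sqnorm_poly_real -[Quat 1 0 0 0]/(qone R) P1 /qnorm2 /=; ring.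
have dS1 : S^`().[1] <= n%:R.
  apply: (deriv1_le_of_le_sqr_half_1addXn delta1 S1) => t t1 td.
  have t0 : 0 <= t by apply: ltW (lt_trans ltr01 t1).
  have normt : qnorm (Quat t 0 0 0) = t.
    by rewrite /qnorm /= expr0n /= !addr0 sqrtr_sqr ger0_norm.
  rewrite sqnorm_poly_real -sqr_qnorm lerXn2r ?nnegrE ?sqrtr_ge0 ?growth //.
  by rewrite divr_ge0 ?addr_ge0 ?exprn_ge0.
have sizeS : (n + n < size S)%N.
  rewrite ltnNge; apply/negP => /(nth_default 0).
  by rewrite coef_sqnorm_poly => /qnorm2_eq0.
have [z Sz z1] : exists2 z : R[i], root (map_poly (real_complex R) S) z & 1 <= `|z|.
  apply: real_poly_root_outside_unit_disk.
    by rewrite (leq_ltn_trans _ sizeS) // (leq_trans n1) ?leq_addr.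
  rewrite S1 divr1 (le_trans dS1) // ler_pdivlMr ?ltr0n // -natrM ler_nat.
  by rewrite muln2 -addnn -ltnS (ltn_predK sizeS).
have [eqUV dotUV] := root_sqnorm_poly Sz.
have [I unitI PI0] := unit_imag_solution eqUV dotUV.
exists (qslice I z); split; first by rewrite slice_eval_slice.
by rewrite -lecR qnorm_slice.
Qed.
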